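(* Let $P$ and $Q$ be irreducible transition matrices on the finite set $S$, both reversible with respect to $\pi$, whose eigenvalues (counting multiplicity) are identical, and suppose $P\ne Q$. Then $P$ does not efficiency-dominate $Q$, and $Q$ does not efficiency-dominate $P$.
   Context: $S$ is a finite set, and $\pi$ is a probability distribution on $S$ with $\pi(x)>0$ for all $x$. A transition matrix $P$ is reversible with respect to $\pi$ if $\pi(x)P(x,y)=\pi(y)P(y,x)$ for all $x,y$; irreducible if every state can be reached from every other with positive probability in some number of steps. For a Markov chain $X_1,X_2,\dots$ with transition matrix $P$ and $X_1\sim\pi$, $v(f,P)=\lim_{N\to\infty}\frac1N\mathrm{Var}\big(\sum_{i=1}^N f(X_i)\big)$. $P$ efficiency-dominates $Q$ if $v(f,P)\le v(f,Q)$ for all $f:S\to\mathbb R$. *)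

(* The finite state space S is 'I_n. *)
From HB Require Import structures.
From mathcomp Require Import all_boot all_order all_algebra.
From mathcomp Require Import all_classical all_reals all_analysis.
Set Implicit Arguments. Unset Strict Implicit. Unset Printing Implicit Defensive.
Import Order.TTheory GRing.Theory Num.Theory.
Import numFieldNormedType.Exports.
Local Open Scope ring_scope.

Section MC.
Variables (R : realType) (n : nat).

Definition prob_pos (pi : 'I_n -> R) : Prop :=
  (forall x, 0 < pi x) /\ \sum_x pi x = 1.

Definition transition_matrix (P : 'M[R]_n) : Prop :=
  (forall x y, 0 <= P x y) /\ (forall x, \sum_y P x y = 1).

Definition reversible (pi : 'I_n -> R) (P : 'M[R]_n) : Prop :=
  forall x y, pi x * P x y = pi y * P y x.

Definition irreducible (P : 'M[R]_n) : Prop :=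
  forall x y, exists k : nat, 0 < (P ^+ k) x y.

(* law of (X_1,...,X_{N+1}) for the chain with X_1 ~ pi *)
Definition path_prob (pi : 'I_n -> R) (P : 'M[R]_n) (N : nat)
  (p : {ffun 'I_N.+1 -> 'I_n}) : R :=
  pi (p ord0) * \prod_(i < N) P (p (inord i)) (p (inord i.+1)).

Definition path_expect (pi : 'I_n -> R) (P : 'M[R]_n) (N : nat)
  (g : {ffun 'I_N.+1 -> 'I_n} -> R) : R :=
  \sum_(p : {ffun 'I_N.+1 -> 'I_n}) path_prob pi P p * g p.

Definition path_sum (f : 'I_n -> R) (N : nat) (p : {ffun 'I_N.+1 -> 'I_n}) : R :=
  \sum_(i < N.+1) f (p i).

Definition var_sum (pi : 'I_n -> R) (P : 'M[R]_n) (f : 'I_n -> R) (N : nat) : R :=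
  path_expect pi P (fun p : {ffun 'I_N.+1 -> 'I_n} => path_sum f p ^+ 2)
  - (path_expect pi P (path_sum f (N:=N))) ^+ 2.

Definition asym_var (pi : 'I_n -> R) (P : 'M[R]_n) (f : 'I_n -> R) : R :=
  limn (fun N : nat => var_sum pi P f N / N.+1%:R).

Definition efficiency_dominates (pi : 'I_n -> R) (P Q : 'M[R]_n) : Prop :=
  forall f : 'I_n -> R, asym_var pi P f <= asym_var pi Q f.

End MC.

From HB Require Import structures.
From mathcomp Require Import all_boot all_order all_algebra.
From mathcomp Require Import all_classical all_reals all_analysis.
From mathcomp Require Import ring lra.
Set Implicit Arguments. Unset Strict Implicit. Unset Printing Implicit Defensive.
Import Order.TTheory GRing.Theory Num.Theory.
Import numFieldNormedType.Exports.
Local Open Scope ring_scope.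

(* Write Π for the matrix whose rows all equal π, and Z = (I - P + Π)^-1 for
   the fundamental matrix of P.  For the chain started at its stationary law π
   and g = f - π(f),
     Var (Σ_{i=1}^N f(X_i)) = N <g, g>_π + 2 Σ_{1<=k<N} (N - k) <g, P^k g>_π;
   as P^k - Π = (P - Π)^k, summing the geometric series gives
   v(f, P) = 2 <g, Z g>_π - <g, g>_π.  Hence if P dominates Q, the π-self-adjoint
   matrix Z_Q - Z_P, which kills constants, has a nonnegative quadratic form.
   The spectrum of Z is 1 together with the 1/(1 - λ) for the remaining
   eigenvalues λ of P, so equal spectra of P and Q give tr Z_P = tr Z_Q.  A
   positive semidefinite matrix with zero trace is zero, so Z_P = Z_Q and P = Q. *)

Section TransitionMatrix.
Variables (R : realType) (n : nat).
Implicit Types (P : 'M[R]_n) (h : 'cV[R]_n).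

Lemma transition_matrix1 : transition_matrix (1%:M : 'M[R]_n).
Proof.
split=> [x y|x]; first by rewrite mxE ler0n.
rewrite (bigD1 x) //= mxE eqxx big1 ?addr0 // => y /negbTE.
by rewrite mxE eq_sym => ->.
Qed.

Lemma transition_matrixM P Q :
  transition_matrix P -> transition_matrix Q -> transition_matrix (P *m Q).
Proof.
move=> [P0 P1] [Q0 Q1]; split=> [x y|x].
  by rewrite mxE; apply: sumr_ge0 => z _; apply: mulr_ge0.
under eq_bigr do rewrite mxE.
rewrite exchange_big /= -(P1 x); apply: eq_bigr => z _.
by rewrite -mulr_sumr Q1 mulr1.
Qed.

Lemma transition_matrixX P k : transition_matrix P -> transition_matrix (P ^+ k).
Proof.
move=> tP; elim: k => [|k IH]; first exact: transition_matrix1.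
by rewrite exprS -mulmxE; apply: transition_matrixM.
Qed.

Lemma transition_matrix_le1 P x y : transition_matrix P -> P x y <= 1.
Proof.
move=> [P0 P1]; rewrite -(P1 x) (bigD1 y) //= lerDl.
by apply: sumr_ge0 => z _.
Qed.

Lemma transition_matrix_const P :
  transition_matrix P -> P *m const_mx 1 = const_mx 1 :> 'cV_n.
Proof.
move=> [_ P1]; apply/matrixP => x j; rewrite !mxE -[RHS](P1 x).
by apply: eq_bigr => y _; rewrite mxE mulr1.
Qed.

(* Maximum principle: the maximum of h propagates along positive transitions. *)
Lemma harmonic_const P h : transition_matrix P -> irreducible P ->
  P *m h = h -> forall x y, h x 0 = h y 0.
Proof.
move=> tP irrP Ph x0.
pose xm := [arg max_(i > x0) h i 0]%O.
have h_le : forall z, h z 0 <= h xm 0.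
  by move=> z; rewrite /xm; case: arg_maxP => // i _ max_i; apply: max_i.
have Pkh k : P ^+ k *m h = h.
  by elim: k => [|k IH]; rewrite ?expr0 ?mul1mx // exprSr -mulmxE -mulmxA Ph.
suff eq_max y : h y 0 = h xm 0 by move=> y; rewrite !eq_max.
have [k Pk_pos] := irrP xm y; have [Pk0 Pk1] := transition_matrixX k tP.
have gap0 : \sum_z (P ^+ k) xm z * (h xm 0 - h z 0) = 0.
  under eq_bigr do rewrite mulrBr.
  rewrite sumrB -mulr_suml Pk1 mul1r.
  by have /matrixP/(_ xm 0) := Pkh k; rewrite mxE => ->; rewrite subrr.
have gap_ge0 z : 0 <= (P ^+ k) xm z * (h xm 0 - h z 0).
  by rewrite mulr_ge0 // subr_ge0.
have /eqP := psumr_eq0P (fun z _ => gap_ge0 z) gap0 (i := y) isT.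
by rewrite mulf_eq0 (gt_eqF Pk_pos) subr_eq0 => /eqP.
Qed.

End TransitionMatrix.

Section FundamentalMatrix.
Variables (R : realType) (n : nat) (pi : 'I_n -> R).
Hypothesis pi_prob : prob_pos pi.
Implicit Types (P : 'M[R]_n).

Definition stat_mx : 'M[R]_n := \matrix_(i, j) pi j.

Definition fund_mx P : 'M[R]_n := 1%:M - P + stat_mx.

Definition fundamental_mx P : 'M[R]_n := invmx (fund_mx P).

Lemma stationary P : transition_matrix P -> reversible pi P ->
  forall y, \sum_x pi x * P x y = pi y.
Proof.
move=> [_ P1] revP y; under eq_bigr do rewrite revP.
by rewrite -mulr_sumr P1 mulr1.
Qed.

Lemma mul_stat_mx P : transition_matrix P -> P *m stat_mx = stat_mx.
Proof.
move=> [_ P1]; apply/matrixP => i j; rewrite !mxE.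
under eq_bigr do rewrite mxE.
by rewrite -mulr_suml P1 mul1r.
Qed.

Lemma stat_mx_mul P : transition_matrix P -> reversible pi P ->
  stat_mx *m P = stat_mx.
Proof.
move=> tP revP; apply/matrixP => i j; rewrite !mxE.
under eq_bigr do rewrite mxE.
exact: stationary.
Qed.

Lemma stat_mx_idem : stat_mx *m stat_mx = stat_mx.
Proof.
apply/matrixP => i j; rewrite !mxE.
under eq_bigr do rewrite !mxE.
by rewrite -mulr_suml pi_prob.2 mul1r.
Qed.

Lemma stat_mx_const (h : 'cV[R]_n) x :
  (forall y, h y 0 = h x 0) -> (stat_mx *m h) x 0 = h x 0.
Proof.
move=> h_const; rewrite mxE.
under eq_bigr do rewrite mxE h_const.
by rewrite -mulr_suml pi_prob.2 mul1r.
Qed.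

Lemma fund_mx_unit P : transition_matrix P -> irreducible P -> reversible pi P ->
  fund_mx P \in unitmx.
Proof.
move=> tP irrP revP; rewrite unitmxE unitfE -det_tr.
apply/negP => /det0P [v v_neq0 vM0].
set h := v^T; have Mh0 : fund_mx P *m h = 0.
  by rewrite -[fund_mx P]trmxK -trmx_mul vM0 trmx0.
have Pih0 : stat_mx *m h = 0.
  have : stat_mx *m fund_mx P = stat_mx.
    by rewrite /fund_mx !mulmxDr mulmxN (stat_mx_mul tP revP) stat_mx_idem mulmx1 subrr add0r.
  by move=> <-; rewrite -mulmxA Mh0 mulmx0.
have Ph : P *m h = h.
  move: Mh0; rewrite /fund_mx !mulmxDl Pih0 addr0 mulNmx mul1mx.
  by move/eqP; rewrite subr_eq0 => /eqP.
have h_const := harmonic_const tP irrP Ph.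
apply/negP: v_neq0; rewrite negbK -trmx_eq0 -/h; apply/eqP/matrixP => x j.
by rewrite ord1 [RHS]mxE -(stat_mx_const (h_const^~ x)) Pih0 mxE.
Qed.

Lemma fundamental_mx_const P :
  transition_matrix P -> irreducible P -> reversible pi P ->
  fundamental_mx P *m const_mx 1 = const_mx 1 :> 'cV_n.
Proof.
move=> tP irrP revP.
have M1 : fund_mx P *m const_mx 1 = const_mx 1 :> 'cV_n.
  rewrite /fund_mx !mulmxDl mulNmx mul1mx (transition_matrix_const tP) subrr add0r.
  by apply/matrixP => x j; rewrite ord1 stat_mx_const // => y; rewrite !mxE.
by rewrite -[in LHS]M1 mulmxA mulVmx ?mul1mx // fund_mx_unit.
Qed.

Lemma reversible_fund_mx P : reversible pi P -> reversible pi (fund_mx P).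
Proof.
move=> revP i j; rewrite /fund_mx !mxE eq_sym !mulrDr !mulrN revP.
by case: eqP => [->|_]; rewrite ?mulr0n ?mulr1n; ring.
Qed.

Lemma reversible_mxP X :
  reversible pi X <-> diag_mx (\row_i pi i) *m X = X^T *m diag_mx (\row_i pi i).
Proof.
split=> [revX|/matrixP DX i j].
  by apply/matrixP => i j; rewrite mul_diag_mx mul_mx_diag !mxE revX mulrC.
by have := DX i j; rewrite mul_diag_mx mul_mx_diag !mxE => ->; rewrite mulrC.
Qed.

Lemma reversible_invmx X : X \in unitmx -> reversible pi X -> reversible pi (invmx X).
Proof.
move=> uX /reversible_mxP DX; apply/reversible_mxP; set D := diag_mx _.
have uXt : X^T \in unitmx by rewrite unitmx_tr.
rewrite trmx_inv -[LHS]mul1mx -(mulVmx uXt) -!mulmxA; congr (_ *m _).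
by rewrite !mulmxA -DX -mulmxA mulmxV // mulmx1.
Qed.

Lemma reversibleB X Y : reversible pi X -> reversible pi Y -> reversible pi (X - Y).
Proof. by move=> revX revY i j; rewrite !mxE !mulrBr revX revY. Qed.

End FundamentalMatrix.

Section PathExpectation.
Variables (R : realType) (n : nat) (pi : 'I_n -> R) (P : 'M[R]_n).
Implicit Types (f : 'I_n -> R).

Definition path_rcons N (q : {ffun 'I_N.+1 -> 'I_n}) (y : 'I_n) :
    {ffun 'I_N.+2 -> 'I_n} :=
  [ffun i : 'I_N.+2 => if (i < N.+1)%N then q (inord i) else y].

Lemma path_rcons_last N q y : path_rcons (N:=N) q y ord_max = y.
Proof. by rewrite ffunE /= ltnn. Qed.

Lemma sum_path_rcons N (F : {ffun 'I_N.+2 -> 'I_n} -> R) :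
  \sum_p F p = \sum_q \sum_y F (path_rcons q y).
Proof.
rewrite pair_big /= (reindex (fun qy => path_rcons qy.1 qy.2)) //.
exists (fun p : {ffun _ -> _} =>
  ([ffun j : 'I_N.+1 => p (widen_ord (leqnSn _) j)], p ord_max)).
  move=> [q y] _ /=; rewrite path_rcons_last; congr pair.
  apply/ffunP => j; rewrite !ffunE /= ltn_ord; congr (q _).
  by apply: val_inj; rewrite /= inordK.
move=> p _; apply/ffunP => i; rewrite !ffunE /=.
case: ifP => i_lt; rewrite ?ffunE; congr (p _); apply: val_inj => /=.
  by rewrite inordK.
by apply/eqP; rewrite eqn_leq leqNgt i_lt -ltnS ltn_ord.
Qed.

Lemma path_prob_rcons N q y :
  path_prob pi P (path_rcons (N:=N) q y) = path_prob pi P q * P (q ord_max) y.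
Proof.
rewrite /path_prob big_ord_recr /= mulrA; congr (_ * _ * _).
- rewrite ffunE /=; congr (pi (q _)); apply: val_inj => /=; by rewrite inordK.
- apply: eq_bigr => i _; have i_le : (i <= N)%N := ltnW (ltn_ord i).
  by rewrite !ffunE /= !inordK ?ltnS ?ltn_ord ?i_le ?(leqW i_le).
- rewrite !ffunE /= !inordK // ltnn ltnSn; congr (P (q _) y).
  by apply: val_inj; rewrite /= inordK.
Qed.

Lemma path_sum_rcons f N q y :
  path_sum f (path_rcons (N:=N) q y) = path_sum f q + f y.
Proof.
rewrite /path_sum big_ord_recr /= path_rcons_last; congr (_ + _).
apply: eq_bigr => i _; rewrite ffunE /= ltn_ord; congr (f (q _)).
by apply: val_inj; rewrite /= inordK.
Qed.

Lemma path_expect1 (F : {ffun 'I_1 -> 'I_n} -> R) :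
  path_expect pi P F = \sum_x pi x * F [ffun => x].
Proof.
rewrite /path_expect (reindex (fun x : 'I_n => [ffun => x] : {ffun 'I_1 -> 'I_n})).
  by apply: eq_bigr => x _; rewrite /path_prob big_ord0 mulr1 ffunE.
exists (fun p : {ffun 'I_1 -> 'I_n} => p ord0) => [x _|p _]; first by rewrite ffunE.
by apply/ffunP => i; rewrite ffunE; congr (p _); apply: val_inj; case: i => [[]].
Qed.

Lemma path_expect_rcons f N (phi : 'I_n -> R -> R) :
  path_expect pi P (fun p : {ffun 'I_N.+2 -> 'I_n} => phi (p ord_max) (path_sum f p)) =
  path_expect pi P (fun q : {ffun 'I_N.+1 -> 'I_n} =>
     \sum_y P (q ord_max) y * phi y (path_sum f q + f y)).
Proof.
rewrite /path_expect sum_path_rcons; apply: eq_bigr => q _; rewrite mulr_sumr.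
apply: eq_bigr => y _.
by rewrite path_prob_rcons path_rcons_last path_sum_rcons mulrA.
Qed.

Lemma eq_path_expect N (F G : {ffun 'I_N.+1 -> 'I_n} -> R) :
  F =1 G -> path_expect pi P F = path_expect pi P G.
Proof. by move=> FG; apply: eq_bigr => p _; rewrite FG. Qed.

Lemma path_expectD N (F G : {ffun 'I_N.+1 -> 'I_n} -> R) :
  path_expect pi P (fun p => F p + G p) = path_expect pi P F + path_expect pi P G.
Proof. by rewrite /path_expect -big_split; apply: eq_bigr => p _; rewrite mulrDr. Qed.

Lemma path_expectZ N c (F : {ffun 'I_N.+1 -> 'I_n} -> R) :
  path_expect pi P (fun p => c * F p) = c * path_expect pi P F.
Proof. by rewrite /path_expect mulr_sumr; apply: eq_bigr => p _; ring. Qed.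

End PathExpectation.

Section Moments.
Variables (R : realType) (n : nat) (pi : 'I_n -> R) (P : 'M[R]_n).
Hypotheses (pi_prob : prob_pos pi) (tP : transition_matrix P) (revP : reversible pi P).
Implicit Types (f g h : 'I_n -> R) (X : 'M[R]_n).

Definition colf h : 'cV[R]_n := \col_x h x.

Definition mean h := \sum_x pi x * h x.

Definition cent h x := h x - mean h.

Definition pdot g (v : 'cV[R]_n) := \sum_x pi x * g x * v x 0.

Definition pform g X := pdot g (X *m colf g).

Lemma pformB g : zmod_morphism (pform g).
Proof.
move=> X Y; rewrite /pform /pdot -sumrB; apply: eq_bigr => x _.
by rewrite mulmxBl mxE [in X in _ + X]mxE mulrBr.
Qed.

HB.instance Definition _ g := GRing.isZmodMorphism.Build _ _ (pform g) (pformB g).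

Lemma mean_cent h : mean (cent h) = 0.
Proof.
rewrite /mean /cent; under eq_bigr do rewrite mulrBr.
by rewrite sumrB -mulr_suml pi_prob.2 mul1r subrr.
Qed.

Lemma mean_stationary h : mean (fun x => \sum_y P x y * h y) = mean h.
Proof.
rewrite /mean; under eq_bigr do rewrite mulr_sumr.
rewrite exchange_big /=; apply: eq_bigr => y _.
under eq_bigr do rewrite mulrA.
by rewrite -mulr_suml stationary.
Qed.

Lemma path_expect_last N h :
  path_expect pi P (fun p : {ffun 'I_N.+1 -> 'I_n} => h (p ord_max)) = mean h.
Proof.
elim: N h => [|N IH] h; first by rewrite path_expect1; apply: eq_bigr => x _; rewrite ffunE.
rewrite (path_expect_rcons _ _ h N (fun y _ => h y)) /=.
by rewrite (IH (fun x => \sum_y P x y * h y)) mean_stationary.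
Qed.

Lemma path_expect_const N c :
  path_expect pi P (fun p : {ffun 'I_N.+1 -> 'I_n} => c) = c.
Proof. by rewrite (path_expect_last N (fun _ => c)) /mean -mulr_suml pi_prob.2 mul1r. Qed.

Lemma path_expect_last_sum h N (v : 'cV[R]_n) :
  path_expect pi P (fun p : {ffun 'I_N.+1 -> 'I_n} => v (p ord_max) 0 * path_sum h p) =
  \sum_(k < N.+1) pdot h (P ^+ k *m v).
Proof.
elim: N v => [|N IH] v.
  rewrite path_expect1 big_ord1 expr0 mul1mx; apply: eq_bigr => x _.
  by rewrite /path_sum big_ord1 !ffunE; ring.
rewrite (path_expect_rcons _ _ h N (fun y s => v y 0 * s)) /=.
rewrite (@eq_path_expect _ _ pi P _ _ (fun q => (P *m v) (q ord_max) 0 * path_sum h q +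
            (fun x => \sum_y P x y * (v y 0 * h y)) (q ord_max))); last first.
  by move=> q /=; rewrite mxE mulr_suml -big_split /=; apply: eq_bigr => y _; ring.
rewrite path_expectD IH (path_expect_last N (fun x => \sum_y P x y * (v y 0 * h y))).
rewrite mean_stationary [RHS]big_ord_recl addrC; congr (_ + _).
  by rewrite expr0 mul1mx; apply: eq_bigr => x _; ring.
by apply: eq_bigr => k _; rewrite lift0 exprSr -mulmxE mulmxA.
Qed.

Lemma path_expect_sum h N :
  path_expect pi P (fun p : {ffun 'I_N.+1 -> 'I_n} => path_sum h p) = N.+1%:R * mean h.
Proof.
rewrite (@eq_path_expect _ _ pi P N _
  (fun p => (const_mx 1 : 'cV[R]_n) (p ord_max) 0 * path_sum h p)); last first.
  by move=> p; rewrite mxE mul1r.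
rewrite path_expect_last_sum (eq_bigr (fun _ => mean h)) ?sumr_const ?card_ord ?mulr_natl //.
move=> k _; rewrite (transition_matrix_const (transition_matrixX k tP)).
by apply: eq_bigr => x _; rewrite mxE mulr1.
Qed.

Lemma path_expect_sum_sqr h N :
  path_expect pi P (fun p : {ffun 'I_N.+1 -> 'I_n} => path_sum h p ^+ 2) =
  N.+1%:R * pform h 1 + 2 * \sum_(j < N) \sum_(k < j.+1) pform h (P ^+ k.+1).
Proof.
have pform1 : pform h 1 = mean (fun x => h x ^+ 2).
  by apply: eq_bigr => x _; rewrite mul1mx mxE mulrA.
elim: N => [|N IH].
  rewrite path_expect1 big_ord0 mulr0 addr0 mul1r pform1; apply: eq_bigr => x _.
  by rewrite /path_sum big_ord1 ffunE.
rewrite (path_expect_rcons _ _ h N (fun y s => s ^+ 2)) /=.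
rewrite (@eq_path_expect _ _ pi P _ _ (fun q => path_sum h q ^+ 2 +
          (2 * ((P *m colf h) (q ord_max) 0 * path_sum h q) +
            (fun x => \sum_y P x y * h y ^+ 2) (q ord_max)))); last first.
  move=> q /=; set S := path_sum h q; set l := q ord_max.
  transitivity (\sum_y (P l y * S ^+ 2 + (2 * (P l y * h y * S) + P l y * h y ^+ 2))).
    by apply: eq_bigr => y _; ring.
  rewrite !big_split /= -mulr_suml tP.2 mul1r -mulr_sumr -mulr_suml mxE.
  by congr (_ + (2 * (_ * _) + _)); apply: eq_bigr => y _; rewrite mxE.
rewrite !path_expectD path_expectZ IH path_expect_last_sum.
rewrite (path_expect_last N (fun x => \sum_y P x y * h y ^+ 2)) mean_stationary.
rewrite [in RHS]big_ord_recr /= -pform1.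
have -> : \sum_(k < N.+1) pdot h (P ^+ k *m (P *m colf h)) =
          \sum_(k < N.+1) pform h (P ^+ k.+1).
  by apply: eq_bigr => k _; rewrite /pform exprSr mulmxA.
rewrite -[N.+2]addn1 natrD; ring.
Qed.

Lemma var_sum_cent f N :
  var_sum pi P f N =
  N.+1%:R * pform (cent f) 1 + 2 * \sum_(j < N) \sum_(k < j.+1) pform (cent f) (P ^+ k.+1).
Proof.
rewrite -path_expect_sum_sqr /var_sum path_expect_sum.
set c := N.+1%:R * mean f.
have shift_sum (p : {ffun 'I_N.+1 -> 'I_n}) : path_sum f p = path_sum (cent f) p + c.
  by rewrite /path_sum /cent sumrB sumr_const card_ord /c mulr_natl subrK.
rewrite (@eq_path_expect _ _ pi P _ _ (fun p => path_sum (cent f) p ^+ 2 +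
   ((2 * c) * path_sum (cent f) p + c ^+ 2))); last first.
  by move=> p /=; rewrite shift_sum; ring.
rewrite !path_expectD path_expectZ path_expect_sum mean_cent path_expect_const; ring.
Qed.

End Moments.

Lemma limn_sub_bounded_div (R : realType) (a K : R) (b : nat -> R) :
  (forall N, `|b N| <= K) -> limn (fun N => a - b N / N.+1%:R) = a.
Proof.
move=> b_le; apply: cvg_lim; first exact: Rhausdorff.
have b_div0 : (b N / N.+1%:R @[N --> \oo] --> (0 : R))%classic.
  apply: (@squeeze_cvgr _ _ _ _ (fun N => - (K * harmonic N)) (fun N => K * harmonic N)).
  - near=> N; rewrite /harmonic /=.
    have inv_ge0 : 0 <= (N.+1%:R : R)^-1 by rewrite invr_ge0 ler0n.
    have := b_le N; rewrite ler_norml => /andP [bN_ge bN_le].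
    by rewrite -mulNr !ler_wpM2r.
  - rewrite -oppr0 -(mulr0 K); apply: cvgN; apply: cvgMl_tmp; exact: cvg_harmonic.
  - rewrite -(mulr0 K); apply: cvgMl_tmp; exact: cvg_harmonic.
rewrite -[X in (_ --> X)%classic]subr0.
exact: (cvgB (cvg_cst a) b_div0).
Unshelve. all: by end_near.
Qed.

Section AsymptoticVariance.
Variables (R : realType) (n : nat) (pi : 'I_n -> R) (P : 'M[R]_n).
Hypotheses (pi_prob : prob_pos pi) (tP : transition_matrix P) (irrP : irreducible P)
  (revP : reversible pi P).

Local Notation Z := (fundamental_mx pi P).
Local Notation A := (P - stat_mx pi).

Lemma fund_mxE : fund_mx pi P = 1 - A.
Proof. by rewrite /fund_mx opprB addrA addrAC. Qed.

Lemma fundamental_mxK : Z * (1 - A) = 1.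
Proof. by rewrite -fund_mxE -mulmxE mulVmx // fund_mx_unit. Qed.

Lemma fundamental_mxKV : (1 - A) * Z = 1.
Proof. by rewrite -fund_mxE -mulmxE mulmxV // fund_mx_unit. Qed.

Lemma exp_centered k : A ^+ k.+1 = P ^+ k.+1 - stat_mx pi.
Proof.
elim: k => [|k IH]; first by rewrite expr1.
rewrite exprSr IH mulrBl !mulrBr -exprSr -!mulmxE.
rewrite (mul_stat_mx pi (transition_matrixX k.+1 tP)) (stat_mx_mul tP revP).
by rewrite stat_mx_idem // subrr subr0.
Qed.

Lemma sum_exp_centered m : \sum_(k < m) A ^+ k = Z * (1 - A ^+ m).
Proof.
have telescope : (1 - A) * \sum_(k < m) A ^+ k = 1 - A ^+ m.
  by rewrite -opprB mulNr -subrX1 opprB.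
by rewrite -telescope mulrA fundamental_mxK mul1r.
Qed.

Lemma sum_sum_exp_centered N :
  \sum_(j < N) \sum_(k < j.+1) A ^+ k.+1 = (A * Z) *+ N - A * Z * A * Z * (1 - A ^+ N).
Proof.
have sum_expS m : \sum_(k < m) A ^+ k.+1 = A * Z * (1 - A ^+ m).
  rewrite -mulrA -sum_exp_centered mulr_sumr.
  by apply: eq_bigr => k _; rewrite exprS.
under eq_bigr do rewrite sum_expS mulrBr mulr1.
by rewrite sumrB sumr_const card_ord -mulr_sumr sum_expS !mulrA.
Qed.

Lemma norm_exp_centered_le1 N x y : `|(A ^+ N) x y| <= 1.
Proof.
case: N => [|k].
  by rewrite expr0 mxE; case: (x == y); rewrite ?normr1 ?normr0.
rewrite exp_centered !mxE.
have [Pk_ge0 _] := transition_matrixX k.+1 tP.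
have Pk_le1 := transition_matrix_le1 x y (transition_matrixX k.+1 tP).
have pi_ge0 := ltW (pi_prob.1 y).
have pi_le1 : pi y <= 1.
  rewrite -pi_prob.2 (bigD1 y) //= lerDl.
  by apply: sumr_ge0 => z _; exact: ltW (pi_prob.1 z).
have := Pk_ge0 x y; rewrite ler_norml => Pxy_ge0; apply/andP; split; lra.
Qed.

Lemma pform_stat_mx g : mean pi g = 0 -> pform pi g (stat_mx pi) = 0.
Proof.
move=> g0; apply: big1 => x _; rewrite mxE.
under eq_bigr do rewrite !mxE.
by move: g0; rewrite /mean => ->; rewrite mulr0.
Qed.

Lemma pform_mul_bounded g W : exists K, forall Y : 'M[R]_n,
  (forall x y, `|Y x y| <= 1) -> `|pform pi g (W * Y)| <= K.
Proof.
exists (\sum_x \sum_y \sum_z `|pi x * g x * W x z * g y|) => Y Y_le1.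
have -> : pform pi g (W * Y) =
    \sum_x \sum_y \sum_z (pi x * g x * W x z * g y) * Y z y.
  apply: eq_bigr => x _; rewrite mxE mulr_sumr; apply: eq_bigr => y _.
  rewrite -mulmxE !mxE mulr_suml mulr_sumr; apply: eq_bigr => z _; ring.
do 3![apply: (le_trans (ler_norm_sum _ _ _)); apply: ler_sum => ? _].
by rewrite normrM ler_piMr.
Qed.

Theorem asym_var_fundamental f :
  asym_var pi P f = 2 * pform pi (cent pi f) Z - pform pi (cent pi f) 1.
Proof.
set g := cent pi f.
have g0 : mean pi g = 0 := mean_cent pi_prob f.
set X := pform pi g (A * Z); set W := pform pi g (A * Z * A * Z).
have var_div N : var_sum pi P f N / N.+1%:R = (pform pi g 1 + 2 * X) -
    (2 * X + 2 * W - 2 * pform pi g (A * Z * A * Z * A ^+ N)) / N.+1%:R.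
  rewrite var_sum_cent // -/g.
  have -> : \sum_(j < N) \sum_(k < j.+1) pform pi g (P ^+ k.+1) =
      pform pi g (\sum_(j < N) \sum_(k < j.+1) A ^+ k.+1).
    rewrite raddf_sum; apply: eq_bigr => j _; rewrite raddf_sum.
    by apply: eq_bigr => k _; rewrite exp_centered raddfB /= pform_stat_mx // subr0.
  rewrite sum_sum_exp_centered raddfB raddfMn (mulrBr (A * Z * A * Z)) mulr1 raddfB /= -/X -/W.
  have N1_neq0 : (N%:R + 1 : R) != 0 by rewrite natr1 pnatr_eq0.
  by rewrite -mulr_natr -natr1; field.
have [K pform_le] := pform_mul_bounded g (A * Z * A * Z).
rewrite /asym_var (funext var_div).
rewrite (@limn_sub_bounded_div _ _ (`|2 * X| + `|2 * W| + `|2| * K)).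
  have AZ : A * Z = Z - 1.
    by rewrite -[in RHS]fundamental_mxKV [in RHS]mulrBl mul1r opprB [in RHS]addrC subrK.
  by rewrite /X AZ raddfB /=; ring.
move=> N; apply: (le_trans (ler_normB _ _)); apply: lerD; first exact: ler_normD.
by rewrite normrM ler_wpM2l // pform_le // => x y; apply: norm_exp_centered_le1.
Qed.

End AsymptoticVariance.

Section CharPoly.
Variables (R : realFieldType) (n : nat).
Implicit Types (A B C P Q Pi : 'M[R]_n).

Lemma horner_char_poly A x : (char_poly A).[x] = \det (x%:M - A).
Proof.
rewrite /char_poly -horner_evalE -det_map_mx /char_poly_mx map_mxB /=.
congr (\det _); apply/matrixP => i j; rewrite !mxE.
by case: (i == j); rewrite /= ?mulr1n ?mulr0n !horner_evalE ?hornerX ?hornerC // rmorph0.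
Qed.

Lemma eq_poly_gt1 (p q : {poly R}) : (forall x, 1 < x -> p.[x] = q.[x]) -> p = q.
Proof.
move=> pq; apply/eqP; rewrite -subr_eq0; apply/eqP.
apply: (@roots_geq_poly_eq0 _ _ [seq i.+2%:R | i <- iota 0 (size (p - q))]).
- apply/allP => _ /mapP [i _ ->].
  by rewrite /root hornerD hornerN pq ?subrr // ltr1n.
- by rewrite map_inj_uniq ?iota_uniq // => i j /eqP; rewrite eqr_nat => /eqP [].
- by rewrite size_map size_iota.
Qed.

Lemma unitmx_1_sub_idem s Pi : 1 < s -> Pi *m Pi = Pi -> 1%:M - s^-1 *: Pi \in unitmx.
Proof.
move=> s_gt1 Pi_idem.
have s_neq0 : s != 0 by rewrite gt_eqF // (lt_trans ltr01).
have s1_neq0 : s - 1 != 0 by rewrite subr_eq0 gt_eqF.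
suff /mulmx1_unit[] : (1%:M - s^-1 *: Pi) *m (1%:M + (s - 1)^-1 *: Pi) = 1%:M by [].
rewrite mulmxBl !mulmxDr !mulmx1 mul1mx -!scalemxAr -scalemxAl Pi_idem.
by apply/matrixP => i j; rewrite !mxE; field; rewrite s_neq0 s1_neq0.
Qed.

(* (s - (P - Pi)) (1 - Pi / s) = s - P, and the second factor does not
   depend on P. *)
Lemma char_poly_sub_idem P Q Pi :
  P *m Pi = Pi -> Q *m Pi = Pi -> Pi *m Pi = Pi ->
  char_poly P = char_poly Q -> char_poly (P - Pi) = char_poly (Q - Pi).
Proof.
move=> P_Pi Q_Pi Pi_idem PQ; apply: eq_poly_gt1 => s s_gt1.
have s_neq0 : s != 0 by rewrite gt_eqF // (lt_trans ltr01).
have factor T : T *m Pi = Pi -> (s%:M - (T - Pi)) *m (1%:M - s^-1 *: Pi) = s%:M - T.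
  move=> T_Pi; rewrite mulmxBl !mulmxBr !mulmx1 mul_scalar_mx !mulmxBl.
  rewrite -!scalemxAr T_Pi Pi_idem.
  by apply/matrixP => i j; rewrite !mxE; field.
have := unitmx_1_sub_idem s_gt1 Pi_idem; rewrite unitmxE unitfE => det_neq0.
apply: (mulIf det_neq0); rewrite !horner_char_poly -!det_mulmx !factor //.
by rewrite -!horner_char_poly PQ.
Qed.

Lemma det_sub_inv_1_sub C y : 1 < y -> 1%:M - C \in unitmx ->
  \det (y%:M - invmx (1%:M - C)) = y ^+ n * (char_poly C).[(y - 1) / y] / (char_poly C).[1].
Proof.
move=> y_gt1 unitC.
have y_neq0 : y != 0 by rewrite gt_eqF // (lt_trans ltr01).
have det_neq0 : \det (1%:M - C) != 0 by rewrite -unitfE -unitmxE.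
have factor : (y%:M - invmx (1%:M - C)) *m (1%:M - C) = y *: (((y - 1) / y)%:M - C).
  rewrite mulmxBl mulVmx // mul_scalar_mx.
  by apply/matrixP => i j; rewrite !mxE; case: (i == j); rewrite /= ?mulr1n ?mulr0n; field.
rewrite !horner_char_poly; apply: (mulIf det_neq0).
by rewrite divfK // -det_mulmx factor detZ.
Qed.

Lemma char_poly_inv_1_sub A B : char_poly A = char_poly B ->
  1%:M - A \in unitmx -> 1%:M - B \in unitmx ->
  char_poly (invmx (1%:M - A)) = char_poly (invmx (1%:M - B)).
Proof.
move=> AB unitA unitB; apply: eq_poly_gt1 => y y_gt1.
by rewrite !horner_char_poly !det_sub_inv_1_sub // AB.
Qed.

Lemma mxtrace_char_poly A B : char_poly A = char_poly B -> \tr A = \tr B.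
Proof.
have [n0 _|n_gt0 AB] := posnP n.
  by rewrite /mxtrace !big1 // => i; have := leq_trans (ltn_ord i) (eq_leq n0).
by apply: oppr_inj; rewrite -!char_poly_trace // AB.
Qed.

End CharPoly.

Section PositiveForms.
Variables (R : realType) (n : nat) (pi : 'I_n -> R).
Implicit Types (g : 'I_n -> R) (X : 'M[R]_n).

Lemma pform_cent g X : X *m const_mx 1 = 0 :> 'cV_n -> reversible pi X ->
  pform pi (cent pi g) X = pform pi g X.
Proof.
move=> X1 revX.
have Xcent : X *m colf (cent pi g) = X *m colf g.
  have -> : colf (cent pi g) = colf g - mean pi g *: const_mx 1.
    by apply/matrixP => x j; rewrite !mxE mulr1.
  by rewrite mulmxBr -scalemxAr X1 scaler0 subr0.
have rowsum0 y : \sum_x X y x = 0.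
  have /matrixP/(_ y 0) := X1; rewrite !mxE => X1y; rewrite -[RHS]X1y.
  by apply: eq_bigr => x _; rewrite mxE mulr1.
have piX0 : \sum_x pi x * (X *m colf g) x 0 = 0.
  under eq_bigr do rewrite mxE mulr_sumr.
  rewrite exchange_big big1 //= => y _.
  under eq_bigr do rewrite mxE mulrA revX mulrAC.
  by rewrite -mulr_sumr rowsum0 mulr0.
rewrite /pform Xcent /pdot.
under eq_bigr do rewrite /cent mulrBr mulrBl [pi _ * mean _ _ * _]mulrAC.
by rewrite sumrB -mulr_suml piX0 mul0r subr0.
Qed.

Lemma sum_delta (F : 'I_n -> R) i : \sum_x (x == i)%:R * F x = F i.
Proof.
rewrite (bigD1 i) //= eqxx mul1r big1 ?addr0 // => x /negbTE ->.
by rewrite mul0r.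
Qed.

Lemma pform_delta X i j t :
  pform pi (fun x => (x == i)%:R + t * (x == j)%:R) X =
  pi i * X i i + t * (pi i * X i j) + t * (pi j * X j i) + t ^+ 2 * (pi j * X j j).
Proof.
have sum_delta2 (F : 'I_n -> R) :
    \sum_x ((x == i)%:R + t * (x == j)%:R) * F x = F i + t * F j.
  under eq_bigr do rewrite mulrDl -mulrA.
  by rewrite big_split /= sum_delta -mulr_sumr sum_delta.
rewrite /pform /pdot.
transitivity (\sum_x ((x == i)%:R + t * (x == j)%:R) * (pi x * (X x i + t * X x j))).
  apply: eq_bigr => x _; rewrite mxE.
  under eq_bigr do rewrite mxE mulrC.
  by rewrite sum_delta2; ring.
by rewrite sum_delta2; ring.
Qed.

Lemma pform_ge0_mxtrace0 X : (forall x, 0 < pi x) -> reversible pi X ->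
  (forall g, 0 <= pform pi g X) -> \tr X = 0 -> X = 0.
Proof.
move=> pi_gt0 revX X_ge0 trX0.
have diag0 i : X i i = 0.
  apply: (psumr_eq0P _ trX0) => // k _.
  have := X_ge0 (fun x => (x == k)%:R + 0 * (x == k)%:R).
  by rewrite pform_delta !mul0r expr0n /= mul0r !addr0 pmulr_rge0.
apply/matrixP => i j; rewrite mxE.
have := X_ge0 (fun x => (x == i)%:R + 1 * (x == j)%:R).
have := X_ge0 (fun x => (x == i)%:R + (-1) * (x == j)%:R).
rewrite !pform_delta !diag0 -(revX i j) => Xij_le Xij_ge.
have /eqP : pi i * X i j = 0 by lra.
by rewrite mulf_eq0 gt_eqF //= => /eqP.
Qed.

End PositiveForms.

Section Domination.
Variables (R : realType) (n : nat) (pi : 'I_n -> R) (P Q : 'M[R]_n).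
Hypotheses (pi_prob : prob_pos pi)
  (tP : transition_matrix P) (irrP : irreducible P) (revP : reversible pi P)
  (tQ : transition_matrix Q) (irrQ : irreducible Q) (revQ : reversible pi Q).

Local Notation ZP := (fundamental_mx pi P).
Local Notation ZQ := (fundamental_mx pi Q).

Lemma reversible_fundamental_mx T : transition_matrix T -> irreducible T ->
  reversible pi T -> reversible pi (fundamental_mx pi T).
Proof.
move=> tT irrT revT.
by apply: reversible_invmx; [exact: fund_mx_unit | exact: reversible_fund_mx].
Qed.

Lemma efficiency_dominates_pform_ge0 :
  efficiency_dominates pi P Q -> forall g, 0 <= pform pi g (ZQ - ZP).
Proof.
move=> PQ g; rewrite -pform_cent; last 2 first.
- by rewrite mulmxBl !fundamental_mx_const ?subrr.
- by apply: reversibleB; apply: reversible_fundamental_mx.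
rewrite raddfB /= subr_ge0.
by have := PQ g; rewrite !asym_var_fundamental //; lra.
Qed.

Lemma mxtrace_fundamental_mx : char_poly P = char_poly Q -> \tr ZP = \tr ZQ.
Proof.
move=> PQ; apply: mxtrace_char_poly; rewrite /fundamental_mx !fund_mxE.
apply: char_poly_inv_1_sub.
- exact: char_poly_sub_idem (mul_stat_mx pi tP) (mul_stat_mx pi tQ) (stat_mx_idem pi_prob) PQ.
- by have := fund_mx_unit pi_prob tP irrP revP; rewrite fund_mxE.
- by have := fund_mx_unit pi_prob tQ irrQ revQ; rewrite fund_mxE.
Qed.

Lemma efficiency_dominates_eq :
  char_poly P = char_poly Q -> efficiency_dominates pi P Q -> P = Q.
Proof.
move=> PQ dom.
have ZQP0 : ZQ - ZP = 0.
  apply: (pform_ge0_mxtrace0 pi_prob.1).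
  - by apply: reversibleB; apply: reversible_fundamental_mx.
  - exact: efficiency_dominates_pform_ge0.
  - by rewrite raddfB /= mxtrace_fundamental_mx // subrr.
have ZPQ : ZP = ZQ by apply/esym/eqP; rewrite -subr_eq0 ZQP0.
have : fund_mx pi P = fund_mx pi Q.
  by rewrite -[LHS]invmxK -[RHS]invmxK; congr invmx; exact: ZPQ.
by rewrite /fund_mx => /addIr /addrI /oppr_inj.
Qed.

End Domination.

Theorem corollary2 (R : realType) (n : nat) (pi : 'I_n -> R) (P Q : 'M[R]_n) :
  prob_pos pi ->
  transition_matrix P -> transition_matrix Q ->
  irreducible P -> irreducible Q ->
  reversible pi P -> reversible pi Q ->
  char_poly P = char_poly Q ->
  P <> Q ->
  ~ efficiency_dominates pi P Q /\ ~ efficiency_dominates pi Q P.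
Proof.
move=> pi_prob tP tQ irrP irrQ revP revQ PQ P_neq_Q; split=> dom; apply: P_neq_Q.
  exact: efficiency_dominates_eq dom.
by apply/esym; apply: efficiency_dominates_eq dom; rewrite // PQ.
Qed.
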